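(* For $v\in\mathbb{C}$ and integers $r\geq0$ define \begin{align*} \rho_r(v)&=\delta_{r,0}-\sum_{m=0}^{2r+1}(-1)^m\binom{v}{2r+1-m}\sum_{k=0}^{m}\frac{(2r+2k)!!}{(-1)^k k!}\mathcal{A}_{m,k}\!\left(\tfrac13,\tfrac14,\tfrac15,\dots\right),\\ \gamma_r(v)&=\sum_{m=0}^{2r}(-1)^m\binom{v}{2r-m}\sum_{k=0}^{m}\frac{(2r+2k-1)!!}{(-1)^k k!}\mathcal{A}_{m,k}\!\left(\tfrac13,\tfrac14,\tfrac15,\dots\right),\\ \tilde\rho_r(v)&=-\sum_{m=0}^{2r+1}\frac{v^{2r+1-m}}{(2r+1-m)!}\sum_{k=0}^{m}\frac{(2r+2k)!!}{(-1)^k k!}\mathcal{A}_{m,k}\!\left(\tfrac1{3!},\tfrac1{4!},\tfrac1{5!},\dots\right),\\ \tilde\gamma_r(v)&=\sum_{m=0}^{2r}\frac{v^{2r-m}}{(2r-m)!}\sum_{k=0}^{m}\frac{(2r+2k-1)!!}{(-1)^k k!}\mathcal{A}_{m,k}\!\left(\tfrac1{3!},\tfrac1{4!},\tfrac1{5!},\dots\right). \end{align*} Then $\rho_0(v)=\tilde\rho_0(v)$, $\gamma_0(v)=\tilde\gamma_0(v)$, and for $r\geq1$, \[ \rho_r(v)=\tilde\rho_r(v)+v\,\tilde\rho_{r-1}(v),\qquad \gamma_r(v)=\tilde\gamma_r(v)+v\,\tilde\gamma_{r-1}(v). \]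
   Context: De Moivre polynomial $\mathcal{A}_{n,k}(a_1,a_2,\dots)$: coefficient of $x^n$ in $(a_1x+a_2x^2+\cdots)^k$ (so $\mathcal{A}_{0,0}=1$, $\mathcal{A}_{n,k}=0$ for $n<k$). Double factorial $n!!=n(n-2)\cdots$ down to $1$ or $2$ for $n\geq1$, $0!!=(-1)!!=1$. $\binom{v}{j}=v(v-1)\cdots(v-j+1)/j!$; $\delta_{r,0}$ Kronecker delta. (The $\rho_r(v)$ are the asymptotic expansion coefficients of $\theta_n(v)$ in $\sum_{j=0}^{n+v-1}\frac{n^j}{j!}+\frac{n^{n+v}}{(n+v)!}\theta_n(v)=\frac{e^n}{2}$, and the $\gamma_r(v)$ those of $\Gamma(n+v+1)/(\sqrt{2\pi n}\,n^{n+v}e^{-n})$.) *)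

From HB Require Import structures.
From mathcomp Require Import all_boot all_order all_algebra.
From mathcomp Require Import complex.
From mathcomp Require Import reals.
Set Implicit Arguments. Unset Strict Implicit. Unset Printing Implicit Defensive.
Import Order.TTheory GRing.Theory Num.Theory.
Local Open Scope ring_scope.

Fixpoint dfact (n : nat) : nat :=
  match n with
  | 0 => 1
  | 1 => 1
  | (m.+2) as n' => n' * dfact m
  end%N.

Definition gbinom {F : fieldType} (v : F) (j : nat) : F :=
  (\prod_(i < j) (v - i%:R)) / (j`!)%:R.

(* Here a : nat -> F with a j = a_j (a 0 unused).
   Terms of degree > n do not affect the coefficient of x^n, so the series is
   truncated at degree n. *)
Definition deMoivre {F : fieldType} (a : nat -> F) (n k : nat) : F :=
  ((\poly_(i < n.+1) (if i == 0%N then 0 else a i)) ^+ k)`_n.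

Definition seqA {F : fieldType} (j : nat) : F := (j.+2)%:R^-1.
Definition seqB {F : fieldType} (j : nat) : F := ((j.+2)`!)%:R^-1.

(* inner sums; the double factorial argument is given as a nat
   (for gamma: 2r+2k-1, with (-1)!! = 1 handled separately) *)
Definition innerRho {F : fieldType} (a : nat -> F) (r m : nat) : F :=
  \sum_(k < m.+1) (dfact (2*r + 2*k))%:R / ((-1) ^+ k * (k`!)%:R) * deMoivre a m k.

(* (2r+2k-1)!! with the convention (-1)!! = 1 *)
Definition dfactm1 (n : nat) : nat := if n is n'.+1 then dfact n' else 1%N.

Definition innerGamma {F : fieldType} (a : nat -> F) (r m : nat) : F :=
  \sum_(k < m.+1) (dfactm1 (2*r + 2*k))%:R / ((-1) ^+ k * (k`!)%:R) * deMoivre a m k.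

Definition rho {F : fieldType} (r : nat) (v : F) : F :=
  (if r == 0%N then 1 else 0)
  - \sum_(m < (2*r+1).+1) (-1) ^+ m * gbinom v (2*r + 1 - m) * innerRho seqA r m.

Definition gamma {F : fieldType} (r : nat) (v : F) : F :=
  \sum_(m < (2*r).+1) (-1) ^+ m * gbinom v (2*r - m) * innerGamma seqA r m.

Definition rhot {F : fieldType} (r : nat) (v : F) : F :=
  - \sum_(m < (2*r+1).+1) v ^+ (2*r + 1 - m) / ((2*r + 1 - m)`!)%:R * innerRho seqB r m.

Definition gammat {F : fieldType} (r : nat) (v : F) : F :=
  \sum_(m < (2*r).+1) v ^+ (2*r - m) / ((2*r - m)`!)%:R * innerGamma seqB r m.

From HB Require Import structures.
From mathcomp Require Import all_boot all_order all_algebra.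
From mathcomp Require Import complex.
From mathcomp Require Import reals.
From mathcomp.algebra_tactics Require Import ring.
From mathcomp Require Import zify.
Import Order.TTheory GRing.Theory Num.Theory.
Local Open Scope ring_scope.
Set Implicit Arguments. Unset Strict Implicit. Unset Printing Implicit Defensive.

(* Power series are handled through their truncations, polynomials compared
   modulo ['X^n].  Put [P_a(x) = sum_(j >= 1) a_j x^j] and
   [D_s(y) = sum_k (s+2k-1)!! / ((-1)^k k!) y^k = (s-1)!! (1+2y)^(-(s+1)/2)],
   so that [(1+2y) D_s' + (s+1) D_s = 0] and [D_s(y)^2 (1+2y)^(s+1)] is constant.
   The inner sums are the coefficients of [D_s(P_a(x))]; with
   [Phi_s(w) = [x^s] D_s(P_B(x)) e^(w x)] this gives at once
   [gamma~_r = Phi_(2r)(v)] and [rho~_r = - Phi_(2r+1)(v)].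
   For the binomial sums, substitute [x = 1 - e^(-t)] in the coefficient
   [[x^s] D_s(P_A(x)) (1-x)^v]: since [-log(1-x) = t], the identities
   [x^2 (1 + 2 P_A(x)) = 2 (-log(1-x) - x)] and
   [t^2 (1 + 2 P_B(-t)) = 2 (e^(-t) - 1 + t)] match [D_s(P_A(x))] with
   [D_s(P_B(-t))] through the square identity, and the coefficient becomes
   [(-1)^s Phi_s(v+1)].  Hence [gamma_r = Phi_(2r)(v+1)] and
   [rho_r = delta_(r,0) - Phi_(2r+1)(v+1)], and the proposition reduces to
   [Phi_(s+2)(w+1) = Phi_(s+2)(w) + w Phi_s(w)], which follows from
   [e^x = 1 + x + x^2 (1 + 2 P_B(x)) / 2] and the differential equations of
   [e^(w x)] and [D_s]. *)

Lemma dvdXp (R : idomainType) (p : {poly R}) : ('X %| p) = (p`_0 == 0).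
Proof. by rewrite -(subr0 'X) -polyC0 dvdp_XsubCl rootE horner_coef0. Qed.

Section PolyCoef.
Variable R : comNzRingType.
Implicit Types p q : {poly R}.

Lemma coef0M p q : (p * q)`_0 = p`_0 * q`_0.
Proof. by rewrite -!horner_coef0 hornerM. Qed.

Lemma coef0_exp p k : (p ^+ k)`_0 = p`_0 ^+ k.
Proof. by rewrite -!horner_coef0 horner_exp. Qed.

Lemma coef0_comp p q : q`_0 = 0 -> (p \Po q)`_0 = p`_0.
Proof. by move=> q0; rewrite -!horner_coef0 horner_comp (horner_coef0 q) q0. Qed.

Lemma coef_compN p i : (p \Po - 'X)`_i = (-1) ^+ i * p`_i.
Proof.
elim/poly_ind: p i => [|p c IHp] i; first by rewrite comp_poly0 !coef0 mulr0.
rewrite comp_polyD comp_polyM comp_polyX comp_polyC !coefD !coefC mulrN coefN !coefMX.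
case: i => [|i] /=; first by rewrite oppr0 expr0 !add0r mul1r.
by rewrite IHp !addr0 exprS mulNr mul1r mulNr.
Qed.

Lemma coef0_oppX : (- 'X : {poly R})`_0 = 0.
Proof. by rewrite coefN coefX oppr0. Qed.

End PolyCoef.

Definition eqm {R : fieldType} (n : nat) (p q : {poly R}) := 'X^n %| p - q.

Notation "p = q %[modX n ]" := (eqm n p q)
  (at level 70, q at next level) : ring_scope.

Lemma eqm_refl (R : fieldType) n (p : {poly R}) : p = p %[modX n].
Proof. by rewrite /eqm subrr dvdp0. Qed.
#[export] Hint Resolve eqm_refl : core.

Section TruncatedEquality.
Variable R : fieldType.
Implicit Types p q r : {poly R}.

Lemma eqmP n p q : reflect (forall i, (i < n)%N -> p`_i = q`_i) (p = q %[modX n]).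
Proof.
rewrite /eqm; apply: (iffP (dvdpP _ _)) => [[d Ed] i lt_in | eq_pq].
  by apply/eqP; rewrite -subr_eq0 -coefB Ed coefMXn lt_in.
exists (drop_poly n (p - q)); rewrite -[LHS](poly_take_drop n) -[RHS]add0r.
congr (_ + _); apply/polyP=> i; rewrite coef_take_poly coef0 coefB.
by case: ifP => // /eq_pq ->; rewrite subrr.
Qed.

Lemma eqm_coef n p q i : p = q %[modX n] -> (i < n)%N -> p`_i = q`_i.
Proof. by move/eqmP; apply. Qed.

Lemma eqm_sym n p q : p = q %[modX n] -> q = p %[modX n].
Proof. by move/eqmP=> eq_pq; apply/eqmP=> i /eq_pq ->. Qed.

Lemma eqm_trans n q p r : p = q %[modX n] -> q = r %[modX n] -> p = r %[modX n].
Proof. by move/eqmP=> eq_pq /eqmP eq_qr; apply/eqmP=> i lt_in; rewrite eq_pq ?eq_qr. Qed.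

Lemma eqm_leq m n p q : (m <= n)%N -> p = q %[modX n] -> p = q %[modX m].
Proof. by move=> le_mn /eqmP eq_pq; apply/eqmP=> i /leq_trans/(_ le_mn)/eq_pq. Qed.

Lemma eqmD n p q p' q' :
  p = q %[modX n] -> p' = q' %[modX n] -> p + p' = q + q' %[modX n].
Proof. by rewrite /eqm opprD addrACA => dv dv'; apply: dvdp_add. Qed.

Lemma eqmN n p q : p = q %[modX n] -> - p = - q %[modX n].
Proof. by rewrite /eqm -opprD dvdpNr. Qed.

Lemma eqmB n p q p' q' :
  p = q %[modX n] -> p' = q' %[modX n] -> p - p' = q - q' %[modX n].
Proof. by move=> eq_pq /eqmN; apply: eqmD. Qed.

Lemma eqmZ n c p q : p = q %[modX n] -> c *: p = c *: q %[modX n].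
Proof. by rewrite /eqm -scalerBr -mul_polyC; apply: dvdp_mull. Qed.

Lemma eqmM n p q p' q' :
  p = q %[modX n] -> p' = q' %[modX n] -> p * p' = q * q' %[modX n].
Proof.
rewrite /eqm (_ : p * p' - q * q' = (p - q) * p' + q * (p' - q')); last by ring.
by move=> dv dv'; apply: dvdp_add; [apply: dvdp_mulr | apply: dvdp_mull].
Qed.

Lemma eqmMl n r p q : p = q %[modX n] -> r * p = r * q %[modX n].
Proof. exact: eqmM. Qed.

Lemma eqmMr n r p q : p = q %[modX n] -> p * r = q * r %[modX n].
Proof. by move/eqmM; apply. Qed.

Lemma eqmMn n k p q : p = q %[modX n] -> p *+ k = q *+ k %[modX n].
Proof. by move/eqmP=> eq_pq; apply/eqmP=> i lt_in; rewrite !coefMn eq_pq. Qed.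

Lemma eqmX n k p q : p = q %[modX n] -> p ^+ k = q ^+ k %[modX n].
Proof. by move=> eq_pq; elim: k => [|k IHk] //; rewrite !exprS eqmM. Qed.

Lemma eqm_comp n r p q : r`_0 = 0 -> p = q %[modX n] -> p \Po r = q \Po r %[modX n].
Proof.
rewrite /eqm => r0 /(dvdpP _ _)[d Ed]; rewrite -comp_polyB Ed comp_polyM comp_Xn_poly.
have /(dvdpP _ _)[r' ->] : 'X %| r by rewrite dvdXp r0.
by rewrite exprMn mulrA dvdp_mulIr.
Qed.

Lemma eqm_deriv n p q : p = q %[modX n.+1] -> p^`() = q^`() %[modX n].
Proof. by move/eqmP=> eq_pq; apply/eqmP=> i lt_in; rewrite !coef_deriv eq_pq. Qed.

Lemma eqm_mul2l n p q q' : p`_0 != 0 -> p * q = p * q' %[modX n] -> q = q' %[modX n].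
Proof.
move=> p0; rewrite /eqm -mulrBr Gauss_dvdpr // coprimep_expl // coprimep_sym.
by rewrite coprimepX rootE horner_coef0.
Qed.

Lemma eqm_mulXn2l n k p q : 'X^k * p = 'X^k * q %[modX n + k] -> p = q %[modX n].
Proof.
move/eqmP=> eq_pq; apply/eqmP=> i lt_in; move: (eq_pq (i + k)%N).
by rewrite !coefXnM ltn_add2r lt_in ltnNge leq_addl addnK; apply.
Qed.

Lemma eqm_inv n p : p`_0 != 0 -> {q | p * q = 1 %[modX n]}.
Proof.
move=> p0; set r := 1 - (p`_0)^-1 *: p.
have r0 : r`_0 = 0 by rewrite coefB coefC coefZ mulVf // subrr.
exists ((p`_0)^-1 *: \sum_(k < n) r ^+ k).
have -> : p * ((p`_0)^-1 *: \sum_(k < n) r ^+ k) = 1 - r ^+ n.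
  rewrite -[1 - r ^+ n]opprB subrX1 -mulNr opprB /r opprB addrCA subrr addr0.
  by rewrite -scalerAr -scalerAl.
rewrite /eqm addrAC subrr add0r dvdpNr; apply: dvdp_exp2r.
by rewrite dvdXp r0.
Qed.

End TruncatedEquality.

Section TruncatedSeries.
Variable F : numFieldType.
Implicit Types (p Y : {poly F}) (a b c v w : F).

Lemma natr_fact_neq0 k : (k`!)%:R != 0 :> F.
Proof. by rewrite pnatr_eq0 -lt0n fact_gt0. Qed.

Lemma natr1_neq0 k : 1 + k%:R != 0 :> F.
Proof. by rewrite addrC natr1 pnatr_eq0. Qed.

Lemma natr_add_neq0 k i : k.+1%:R + i%:R != 0 :> F.
Proof. by rewrite -natrD pnatr_eq0. Qed.

Lemma eqm_deriv0 n p : p^`() = 0 %[modX n] -> p = (p`_0)%:P %[modX n.+1].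
Proof.
move/eqmP=> dp0; apply/eqmP=> -[|i] lt_in; rewrite coefC //=.
by apply/eqP; move: (dp0 i lt_in); rewrite coef_deriv coef0 => /eqP; rewrite mulrn_eq0.
Qed.

Definition exp_poly n c : {poly F} := \poly_(i < n) (c ^+ i / (i`!)%:R).

Lemma exp_poly_coef0 n c : (exp_poly n.+1 c)`_0 = 1.
Proof. by rewrite coef_poly expr0 divr1. Qed.

Lemma deriv_exp_poly n c : (exp_poly n.+1 c)^`() = c *: exp_poly n.+1 c %[modX n].
Proof.
apply/eqmP=> i lt_in; rewrite coef_deriv coefZ !coef_poly ltnS lt_in ltnW //.
rewrite factS natrM -mulr_natr exprS.
by field; rewrite natr_fact_neq0 natr1_neq0.
Qed.

Lemma eqm_exp_poly n c Y :
  Y^`() = c *: Y %[modX n] -> Y = Y`_0 *: exp_poly n.+1 c %[modX n.+1].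
Proof.
move/eqmP=> dY; apply/eqmP; elim=> [|i IHi] lt_i; rewrite coefZ coef_poly lt_i.
  by rewrite expr0 divr1 mulr1.
apply: (@pmulrnI F i.+1) => //=; move: (dY i lt_i).
rewrite coef_deriv coefZ IHi 1?ltnW // coefZ coef_poly ltnW // => ->.
rewrite factS natrM -mulr_natr exprS.
by field; rewrite natr_fact_neq0 natr1_neq0.
Qed.

Lemma exp_polyD n a b :
  exp_poly n.+1 a * exp_poly n.+1 b = exp_poly n.+1 (a + b) %[modX n.+1].
Proof.
set E := exp_poly n.+1.
have -> : E (a + b) = (E a * E b)`_0 *: E (a + b).
  by rewrite coef0M !exp_poly_coef0 mulr1 scale1r.
apply: eqm_exp_poly; rewrite derivM scalerDl.
apply: (eqm_trans (q := a *: E a * E b + E a * (b *: E b))).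
  by apply: eqmD; [apply: eqmMr | apply: eqmMl]; apply: deriv_exp_poly.
by rewrite -scalerAl -scalerAr.
Qed.

Lemma exp_poly_compN n c : exp_poly n c \Po - 'X = exp_poly n (- c).
Proof.
apply/polyP=> i; rewrite coef_compN !coef_poly.
by case: ifP; rewrite ?mulr0 // (exprNn c) mulrA.
Qed.

Lemma gbinom0 v : gbinom v 0 = 1.
Proof. by rewrite /gbinom big_ord0 divr1. Qed.

Lemma gbinomS v i : i.+1%:R * gbinom v i.+1 = (v - i%:R) * gbinom v i.
Proof.
rewrite /gbinom big_ord_recr /= factS natrM.
by field; rewrite natr_fact_neq0 natr1_neq0.
Qed.

Definition binom_poly n v : {poly F} := \poly_(i < n) ((-1) ^+ i * gbinom v i).

Lemma binom_poly_coef0 n v : (binom_poly n.+1 v)`_0 = 1.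
Proof. by rewrite coef_poly gbinom0 mulr1. Qed.

Lemma binom_poly_ode n v :
  (1 - 'X) * (binom_poly n.+1 v)^`() = - v *: binom_poly n.+1 v %[modX n].
Proof.
apply/eqmP=> i lt_in; rewrite mulrBl mul1r coefB coefXM coefZ !coef_deriv.
rewrite !coef_poly ltnS lt_in -mulrnAr -mulr_natl gbinomS.
case: i lt_in => [|i] lt_in /=; first by rewrite subr0 gbinom0; ring.
by rewrite ltnS (ltnW lt_in) -mulrnAr -mulr_natl !exprS; ring.
Qed.

(* the truncation of [- log (1 - x)] *)
Definition log_poly n : {poly F} := \poly_(i < n) (if i == 0%N then 0 else i%:R^-1).

Lemma log_poly_ode n : (1 - 'X) * (log_poly n.+1)^`() = 1 %[modX n].
Proof.
have dlog i : (i < n)%N -> (log_poly n.+1)^`()`_i = 1.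
  move=> lt_in; rewrite coef_deriv coef_poly ltnS lt_in /=.
  by rewrite -[_ *+ i.+1]mulr_natr mulVf // pnatr_eq0.
apply/eqmP=> i lt_in; rewrite mulrBl mul1r coefB coefXM coefC dlog //.
by case: i lt_in => [|i] lt_in; rewrite ?subr0 //= dlog 1?ltnW ?subrr.
Qed.

(* [1 - exp (- t)], the inverse of [- log (1 - x)] *)
Definition cov_poly n : {poly F} := 1 - exp_poly n (-1).

Lemma cov_poly_coef0 n : (cov_poly n.+1)`_0 = 0.
Proof. by rewrite coefB coefC exp_poly_coef0 subrr. Qed.

Lemma deriv_cov_poly n : (cov_poly n.+1)^`() = 1 - cov_poly n.+1 %[modX n].
Proof.
rewrite /cov_poly derivB -polyC1 derivC sub0r opprB polyC1 addrC subrK.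
rewrite -[X in _ = X %[modX _]]opprK -(scaleN1r (exp_poly _ _)).
exact/eqmN/deriv_exp_poly.
Qed.

Lemma deriv_comp_cov n Q :
  (Q \Po cov_poly n.+1)^`() = ((1 - 'X) * Q^`()) \Po cov_poly n.+1 %[modX n].
Proof.
rewrite deriv_comp comp_polyM comp_polyB comp_polyX comp_polyC mulrC.
by apply: eqmMr; apply: deriv_cov_poly.
Qed.

Lemma binom_poly_cov n v :
  binom_poly n.+1 v \Po cov_poly n.+1 = exp_poly n.+1 (- v) %[modX n.+1].
Proof.
rewrite -[exp_poly _ _]scale1r -(binom_poly_coef0 n v) -(coef0_comp _ (cov_poly_coef0 n)).
apply: eqm_exp_poly; apply: eqm_trans (deriv_comp_cov _ _) _.
by rewrite -comp_polyZ; apply: eqm_comp (cov_poly_coef0 n) (binom_poly_ode n v).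
Qed.

Lemma log_poly_cov n : log_poly n.+1 \Po cov_poly n.+1 = 'X %[modX n.+1].
Proof.
rewrite -[X in _ = X %[modX _]]add0r -[_ \Po _](subrK 'X); apply: eqmD => //.
have -> : 0 = ((log_poly n.+1 \Po cov_poly n.+1 - 'X)`_0)%:P :> {poly F}.
  by rewrite coefB coef0_comp ?cov_poly_coef0 // coef_poly coefX subr0.
apply: eqm_deriv0; rewrite derivB derivX -(subrr 1); apply: eqmB => //.
apply: eqm_trans (deriv_comp_cov _ _) _.
rewrite -[X in _ = X %[modX _]]polyC1 -(comp_polyC 1 (cov_poly n.+1)) polyC1.
exact: eqm_comp (cov_poly_coef0 n) (log_poly_ode n).
Qed.

End TruncatedSeries.

Section InnerSeries.
Variable F : numFieldType.

Definition seq_poly n (a : nat -> F) : {poly F} :=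
  \poly_(i < n) (if i == 0%N then 0 else a i).

Lemma seq_poly_coef0 n a : (seq_poly n a)`_0 = 0.
Proof. by rewrite coef_poly; case: n. Qed.

Lemma seqA_log n :
  'X^2 * (1 + 2%:R *: seq_poly n seqA) = 2%:R *: (log_poly F n - 'X) %[modX n].
Proof.
apply/eqmP=> i lt_in; rewrite coefXnM coefZ coefB coefD coefZ coefC coefX !coef_poly lt_in.
case: i lt_in => [|[|[|i]]] lt_in /=; rewrite ?if_same; try by field.
by rewrite subn2 /= (ltnW (ltnW lt_in)) subr0 add0r.
Qed.

Lemma seqB_exp n :
  'X^2 * (1 + 2%:R *: seq_poly n seqB) = 2%:R *: (exp_poly n 1 - 1 - 'X) %[modX n].
Proof.
apply/eqmP=> i lt_in; rewrite coefXnM coefZ !coefB coefD coefZ !coefC coefX !coef_poly lt_in.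
case: i lt_in => [|[|[|i]]] lt_in /=; rewrite ?if_same expr1n;
  try by rewrite ?factS fact0; field.
by rewrite subn2 /= (ltnW (ltnW lt_in)) !subr0 add0r div1r.
Qed.

Lemma seq_poly_leq m n a : (m <= n)%N -> seq_poly n a = seq_poly m a %[modX m].
Proof.
by move=> le_mn; apply/eqmP=> i lt_im; rewrite !coef_poly lt_im (leq_trans lt_im le_mn).
Qed.

Lemma coef_seq_poly_exp n a k m : (m < k)%N -> (seq_poly n a ^+ k)`_m = 0.
Proof.
have /dvdpP[q ->] : 'X %| seq_poly n a by rewrite dvdXp seq_poly_coef0.
by move=> lt_mk; rewrite exprMn coefMXn lt_mk.
Qed.

Lemma dfactm1SS m : dfactm1 m.+2 = (m.+1 * dfactm1 m)%N.
Proof. by case: m. Qed.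

Lemma dfactm1_gt0 m : (0 < dfactm1 m)%N.
Proof.
suff: (0 < dfactm1 m)%N && (0 < dfactm1 m.+1)%N by case/andP.
by elim: m => [|m /andP[pos_m pos_m1]] //; rewrite pos_m1 dfactm1SS muln_gt0.
Qed.

Definition dfact_coef s k : F := (dfactm1 (s + 2 * k))%:R / ((-1) ^+ k * (k`!)%:R).

(* the truncation of [(s - 1)!! (1 + 2 y) ^ (- (s + 1) / 2)] *)
Definition dfact_poly n s : {poly F} := \poly_(k < n) dfact_coef s k.

Lemma dfact_coef0 s : dfact_coef s 0 = (dfactm1 s)%:R.
Proof. by rewrite /dfact_coef muln0 addn0 expr0 mul1r divr1. Qed.

Lemma dfact_coefS s k : dfact_coef s k.+1 *+ k.+1 = - dfact_coef s.+2 k.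
Proof.
rewrite /dfact_coef (_ : s + 2 * k.+1 = s.+2 + 2 * k)%N; last by lia.
rewrite factS natrM -mulr_natr exprS.
by field; rewrite signr_eq0 natr_fact_neq0 natr1_neq0.
Qed.

Lemma dfact_coef_rec s k :
  dfact_coef s.+2 k.+1 + 2%:R * dfact_coef s.+2 k = s.+1%:R * dfact_coef s k.+1.
Proof.
rewrite /dfact_coef (_ : s.+2 + 2 * k.+1 = (s + 2 * k).+2.+2)%N; last by lia.
rewrite (_ : s + 2 * k.+1 = (s + 2 * k).+2)%N; last by lia.
rewrite (_ : s.+2 + 2 * k = (s + 2 * k).+2)%N; last by lia.
rewrite !dfactm1SS factS !natrM exprS.
by field; rewrite signr_eq0 natr_fact_neq0 natr1_neq0.
Qed.

Lemma dfact_poly_coef0 n s : (dfact_poly n.+1 s)`_0 = (dfactm1 s)%:R.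
Proof. by rewrite coef_poly dfact_coef0. Qed.

Lemma deriv_dfact_poly n s :
  (dfact_poly n.+1 s)^`() = - dfact_poly n.+1 s.+2 %[modX n].
Proof.
apply/eqmP=> k lt_kn.
by rewrite coef_deriv coefN !coef_poly ltnS lt_kn ltnW // dfact_coefS.
Qed.

Lemma dfact_polyS n s :
  (1 + 2%:R *: 'X) * dfact_poly n s.+2 = s.+1%:R *: dfact_poly n s %[modX n].
Proof.
apply/eqmP=> -[|k] lt_kn; rewrite mulrDl mul1r coefD -scalerAl !coefZ coefXM.
  by rewrite !coef_poly lt_kn /= mulr0 addr0 !dfact_coef0 dfactm1SS natrM.
by rewrite /= !coef_poly lt_kn ltnW // dfact_coef_rec.
Qed.

Lemma dfact_poly_ode n s :
  (1 + 2%:R *: 'X) * (dfact_poly n.+1 s)^`() + s.+1%:R *: dfact_poly n.+1 s = 0 %[modX n].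
Proof.
set D := dfact_poly n.+1; set G : {poly F} := 1 + 2%:R *: 'X.
apply: (eqm_trans (q := - (G * D s.+2) + s.+1%:R *: D s)).
  by rewrite -mulrN; apply/eqmD/eqm_refl/eqmMl/deriv_dfact_poly.
rewrite -(addNr (s.+1%:R *: D s)); apply/eqmD/eqm_refl/eqmN.
exact/(eqm_leq (leqnSn n))/dfact_polyS.
Qed.

Lemma dfact_poly_sqr n s :
  dfact_poly n.+1 s ^+ 2 * (1 + 2%:R *: 'X) ^+ s.+1 = ((dfactm1 s)%:R ^+ 2)%:P %[modX n.+1].
Proof.
set D := dfact_poly n.+1 s; set G : {poly F} := 1 + 2%:R *: 'X.
have -> : (dfactm1 s)%:R ^+ 2 = (D ^+ 2 * G ^+ s.+1)`_0.
  rewrite coef0M !coef0_exp dfact_poly_coef0 coefD coefZ coefC coefX.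
  by rewrite mulr0 addr0 expr1n mulr1.
apply: eqm_deriv0.
have -> : (D ^+ 2 * G ^+ s.+1)^`() = 2%:R *: (D * G ^+ s) * (G * D^`() + s.+1%:R *: D).
  rewrite derivM !deriv_exp {2}/G derivD derivC add0r derivZ derivX /=.
  by rewrite [G ^+ s.+1]exprS -!mul_polyC !polyC_natr; ring.
by rewrite -(mulr0 (2%:R *: (D * G ^+ s))); apply/eqmMl/dfact_poly_ode.
Qed.

Definition inner_poly n s a : {poly F} := dfact_poly n s \Po seq_poly n a.

Lemma inner_poly_coef0 n s a : (inner_poly n.+1 s a)`_0 = (dfactm1 s)%:R.
Proof. by rewrite coef0_comp ?seq_poly_coef0 // dfact_poly_coef0. Qed.

Lemma inner_poly_sqr n s a :
  inner_poly n.+1 s a ^+ 2 * (1 + 2%:R *: seq_poly n.+1 a) ^+ s.+1 =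
  ((dfactm1 s)%:R ^+ 2)%:P %[modX n.+1].
Proof.
have := eqm_comp (seq_poly_coef0 n.+1 a) (dfact_poly_sqr n s).
by rewrite rmorphM !rmorphXn rmorphD rmorph1 /= comp_polyZ comp_polyX comp_polyC.
Qed.

Definition inner_sum s a m := \sum_(k < m.+1) dfact_coef s k * deMoivre a m k.

Lemma coef_inner_poly n s a m : (m < n)%N -> (inner_poly n s a)`_m = inner_sum s a m.
Proof.
move=> lt_mn; rewrite /inner_poly /dfact_poly poly_def raddf_sum coef_sum /=.
under eq_bigr => k _ do rewrite comp_polyZ comp_Xn_poly coefZ.
rewrite /inner_sum (big_ord_widen n (fun k => dfact_coef s k * deMoivre a m k) lt_mn).
rewrite [RHS]big_mkcond /=; apply: eq_bigr => k _; case: ifP => [le_km | /negbT].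
  by congr (_ * _); apply/(eqm_coef _ (ltnSn m))/eqmX/seq_poly_leq.
by rewrite -ltnNge ltnS => /coef_seq_poly_exp ->; rewrite mulr0.
Qed.

End InnerSeries.

(* [x = T(t)] with [T = phi t] and [psi = 1 / phi]: the residue of
   [G(x) dx / x^(N+1)] is invariant under the substitution. *)
Section ChangeOfVariables.
Variables (F : numFieldType) (m : nat) (T phi psi : {poly F}).
Hypotheses (T_def : T = phi * 'X) (phi_psi : phi * psi = 1 %[modX m.+1]).

Lemma deriv_inv : psi^`() = - (phi^`() * psi ^+ 2) %[modX m].
Proof.
have d_phi_psi : phi^`() * psi + phi * psi^`() = 0 %[modX m].
  by rewrite -derivM -(derivC (1 : F)) polyC1; apply: eqm_deriv.
apply: (eqm_trans (q := (phi * psi) * psi^`())).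
  by rewrite -{1}[psi^`()]mul1r; apply/eqmMr/eqm_sym/(eqm_leq (leqnSn m)).
rewrite (_ : _ * _ = psi * (phi^`() * psi + phi * psi^`()) - phi^`() * psi ^+ 2).
  by rewrite -[X in _ = X %[modX _]]add0r -(mulr0 psi); apply/eqmB/eqm_refl/eqmMl.
by ring.
Qed.

Lemma deriv_inv_exp j : (psi ^+ j.+1)^`() = - (phi^`() * psi ^+ j.+2) *+ j.+1 %[modX m].
Proof.
rewrite deriv_exp /= (_ : - (_ * _) = - (phi^`() * psi ^+ 2) * psi ^+ j).
  exact/eqmMn/eqmMr/deriv_inv.
by rewrite !exprS expr0; ring.
Qed.

Lemma coef_inv_exp_residue j : (j <= m)%N ->
  (psi ^+ j + 'X * (phi^`() * psi ^+ j.+1))`_j = (j == 0%N)%:R.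
Proof.
case: j => [|k] le_km; first by rewrite coefD coefXM expr0 coefC addr0.
rewrite coefD coefXM /=; apply: (@pmulrnI F k.+1) => //; rewrite mulrnDl mul0rn.
have := eqm_coef (deriv_inv_exp k) le_km; rewrite coef_deriv coefMn coefN => ->.
by rewrite mulNrn addNr.
Qed.

Lemma coef_cov_exp i N : (N < m)%N -> (T ^+ i * T^`() * psi ^+ N.+1)`_N = (i == N)%:R.
Proof.
move=> lt_Nm; have -> : T ^+ i * T^`() * psi ^+ N.+1 = 'X^i * (phi ^+ i * T^`() * psi ^+ N.+1).
  by rewrite T_def exprMn; ring.
rewrite coefXnM; case: ltnP => [lt_Ni | le_iN]; first by rewrite gtn_eqF.
have {le_iN} [j def_N] : exists j, N = (i + j)%N by exists (N - i)%N; rewrite subnKC.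
subst N.
have -> : (i == i + j)%N = (j == 0%N) by rewrite -[X in X == _]addn0 eqn_add2l eq_sym.
rewrite addKn -coef_inv_exp_residue; last by lia.
apply: (@eqm_coef _ m.+1); last by lia.
have -> : phi ^+ i * T^`() * psi ^+ (i + j).+1 =
          (phi * psi) ^+ i * (phi * psi * psi ^+ j + 'X * (phi^`() * psi ^+ j.+1)).
  by rewrite T_def derivM derivX mulr1 -addnS exprD !exprS exprMn; ring.
rewrite -[X in _ = X %[modX _]]mul1r -(expr1n _ i) -[X in _ = _ * (X + _) %[modX _]]mul1r.
by apply: eqmM; [apply: eqmX | apply/eqmD/eqm_refl/eqmMr].
Qed.

Lemma coef_comp_cov (G : {poly F}) N :
  (N < m)%N -> G`_N = ((G \Po T) * T^`() * psi ^+ N.+1)`_N.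
Proof.
move=> lt_Nm; rewrite comp_polyE !mulr_suml coef_sum.
under eq_bigr => i _ do rewrite -!scalerAl coefZ coef_cov_exp //.
case: (ltnP N (size G)) => [lt_NG | le_GN].
  rewrite (bigD1 (Ordinal lt_NG)) //= eqxx mulr1 big1 ?addr0 // => i neq_iN.
  suff /negbTE-> : (i : nat) != N by rewrite mulr0.
  by apply: contraNneq neq_iN => eq_iN; apply/eqP/val_inj.
rewrite nth_default // big1 // => i _.
by rewrite ltn_eqF ?mulr0 // (leq_trans (ltn_ord i) le_GN).
Qed.

End ChangeOfVariables.

Section BinomialToExponential.
Variable F : numFieldType.

Lemma eqm_sqr_inj n (p q : {poly F}) :
  p`_0 = q`_0 -> p`_0 != 0 -> p ^+ 2 = q ^+ 2 %[modX n] -> p = q %[modX n].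
Proof.
move=> pq0 p0 eq_sqr; have pq0' : (p + q)`_0 != 0.
  by rewrite coefD -pq0 -mulr2n mulrn_eq0.
have : (p + q) * (p - q) = (p + q) * 0 %[modX n].
  rewrite mulr0 (_ : _ * _ = p ^+ 2 - q ^+ 2); last by ring.
  by rewrite -(subrr (q ^+ 2)); apply: eqmB.
by move/(eqm_mul2l pq0'); rewrite /eqm !subr0.
Qed.

Lemma cov_polyE n : cov_poly F n.+1 = drop_poly 1 (cov_poly F n.+1) * 'X.
Proof.
rewrite -{1}(poly_take_drop 1 (cov_poly F n.+1)) (_ : take_poly 1 _ = 0) ?add0r //.
by apply/polyP=> -[|i]; rewrite coef_take_poly coef0 ?cov_poly_coef0.
Qed.

Lemma cov_poly_coef1 n : (cov_poly F n.+2)`_1 = 1.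
Proof. by rewrite coefB coefC coef_poly /= expr1 divr1 sub0r opprK. Qed.

Lemma seqA_seqB_cov n :
  cov_poly F n.+1 ^+ 2 * ((1 + 2%:R *: seq_poly n.+1 seqA) \Po cov_poly F n.+1) =
  'X^2 * ((1 + 2%:R *: seq_poly n.+1 seqB) \Po - 'X) %[modX n.+1].
Proof.
set T := cov_poly F n.+1.
apply: (eqm_trans (q := 2%:R *: ('X - T))).
  rewrite -comp_Xn_poly -comp_polyM.
  apply: eqm_trans (eqm_comp (cov_poly_coef0 F n) (seqA_log F n.+1)) _.
  by rewrite comp_polyZ comp_polyB comp_polyX; apply/eqmZ/eqmB/eqm_refl/log_poly_cov.
apply: eqm_sym; rewrite -[X in X * _]sqrrN -comp_Xn_poly -comp_polyM.
apply: eqm_trans (eqm_comp (coef0_oppX F) (seqB_exp F n.+1)) _.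
rewrite comp_polyZ !rmorphB /= rmorph1 comp_polyX exp_poly_compN.
by rewrite (_ : _ - _ = 'X - T) // /T /cov_poly; ring.
Qed.

Lemma binom_poly_cov_deriv n (v : F) :
  (binom_poly n.+1 v \Po cov_poly F n.+1) * (cov_poly F n.+1)^`() =
  exp_poly n.+1 (- (v + 1)) %[modX n].
Proof.
apply: (eqm_trans (q := exp_poly n.+1 (- v) * exp_poly n.+1 (-1))).
  apply: eqmM; first exact/(eqm_leq (leqnSn n))/binom_poly_cov.
  by apply: eqm_trans (deriv_cov_poly F n) _; rewrite /cov_poly opprB addrC subrK.
by rewrite opprD; apply/(eqm_leq (leqnSn n))/exp_polyD.
Qed.

Lemma inner_poly_cov n s phi psi : (2 * s.+1 <= n.+1)%N ->
  cov_poly F n.+1 = phi * 'X -> phi * psi = 1 %[modX n.+1] -> psi`_0 = 1 ->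
  (inner_poly n.+1 s seqA \Po cov_poly F n.+1) * psi ^+ s.+1 =
  inner_poly n.+1 s seqB \Po - 'X %[modX n.+1 - 2 * s.+1].
Proof.
move=> le_sn T_def phi_psi psi0.
set T := cov_poly F n.+1 in T_def *; set c : F := (dfactm1 s)%:R.
set A := inner_poly n.+1 s seqA \Po T; set Z := A * _; set Zt := _ \Po - 'X.
pose gT : {poly F} := (1 + 2%:R *: seq_poly n.+1 seqA) \Po T.
pose W : {poly F} := (1 + 2%:R *: seq_poly n.+1 seqB) \Po - 'X.
have sqrA : ('X ^+ 2) ^+ s.+1 * (W ^+ s.+1 * Z ^+ 2) =
            (c ^+ 2)%:P * ('X ^+ 2) ^+ s.+1 %[modX n.+1].
  have -> : ('X ^+ 2) ^+ s.+1 * (W ^+ s.+1 * Z ^+ 2) =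
            A ^+ 2 * (psi ^+ 2 * ('X^2 * W)) ^+ s.+1.
    rewrite /Z [(A * _) ^+ 2]exprMn [psi ^+ _ ^+ 2]exprAC [in RHS]exprMn [(_ * W) ^+ _]exprMn.
    ring.
  apply: (eqm_trans (q := A ^+ 2 * (psi ^+ 2 * (T ^+ 2 * gT)) ^+ s.+1)).
    by apply/eqmMl/eqmX/eqmMl/eqm_sym/seqA_seqB_cov.
  rewrite (_ : _ * _ = (A ^+ 2 * gT ^+ s.+1) * ((T * psi) ^+ 2) ^+ s.+1); last first.
    by rewrite !exprMn; ring.
  apply: eqmM; last first.
    by apply/eqmX/eqmX; rewrite T_def mulrAC -[X in _ = X %[modX _]]mul1r eqmMr.
  have := eqm_comp (cov_poly_coef0 F n) (inner_poly_sqr n s seqA).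
  by rewrite comp_polyM !rmorphXn /= comp_polyC.
have sqrB : W ^+ s.+1 * Zt ^+ 2 = (c ^+ 2)%:P %[modX n.+1].
  have := eqm_comp (coef0_oppX F) (inner_poly_sqr n s seqB).
  by rewrite comp_polyM !rmorphXn /= comp_polyC mulrC.
have W0 : (W ^+ s.+1)`_0 != 0.
  rewrite coef0_exp coef0_comp ?coef0_oppX // coefD coefZ seq_poly_coef0 coefC.
  by rewrite mulr0 addr0 expr1n oner_neq0.
have Z0 : Z`_0 = c.
  by rewrite coef0M coef0_exp psi0 expr1n mulr1 coef0_comp ?cov_poly_coef0 ?inner_poly_coef0.
have Zt0 : Zt`_0 = c by rewrite coef0_comp ?coef0_oppX // inner_poly_coef0.
apply: eqm_sqr_inj; rewrite ?Z0 ?Zt0 ?pnatr_eq0 -?lt0n ?dfactm1_gt0 //.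
apply: (eqm_mul2l W0).
apply: (@eqm_mulXn2l _ _ (2 * s.+1)); rewrite subnK // exprM.
apply: eqm_trans sqrA _; rewrite mulrC; exact/eqmMl/eqm_sym/sqrB.
Qed.

Theorem binom_exp_coef n s (v : F) : (3 * s.+1 <= n)%N ->
  (inner_poly n.+1 s seqA * binom_poly n.+1 v)`_s =
  (-1) ^+ s * (inner_poly n.+1 s seqB * exp_poly n.+1 (v + 1))`_s.
Proof.
move=> le_sn; have [k def_n] : exists k, n = k.+1 by exists n.-1; rewrite prednK //; lia.
set T := cov_poly F n.+1; set phi := drop_poly 1 T.
have T_def : T = phi * 'X := cov_polyE n.
have phi0 : phi`_0 = 1 by rewrite coef_drop_poly /T def_n cov_poly_coef1.
have [psi phi_psi] : {psi | phi * psi = 1 %[modX n.+1]}.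
  by apply: eqm_inv; rewrite phi0 oner_neq0.
have psi0 : psi`_0 = 1.
  by have := eqm_coef phi_psi (ltn0Sn n); rewrite coef0M phi0 mul1r coefC.
rewrite (coef_comp_cov T_def phi_psi _ (_ : s < n)%N) ?comp_polyM; last by lia.
set A := inner_poly n.+1 s seqA \Po T; set B := binom_poly n.+1 v \Po T.
have -> : A * B * T^`() * psi ^+ s.+1 = (A * psi ^+ s.+1) * (B * T^`()) by ring.
have le_K : (2 * s.+1 <= n.+1)%N by lia.
have le_Kn : (n.+1 - 2 * s.+1 <= n)%N by lia.
have lt_sK : (s < n.+1 - 2 * s.+1)%N by lia.
have := eqmM (inner_poly_cov le_K T_def phi_psi psi0)
             (eqm_leq le_Kn (binom_poly_cov_deriv n v)).
move/eqm_coef/(_ lt_sK)->.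
by rewrite -exp_poly_compN -comp_polyM coef_compN.
Qed.

End BinomialToExponential.

Definition Phi (F : numFieldType) n s (w : F) :=
  (inner_poly n.+1 s seqB * exp_poly n.+1 w)`_s.

Section Recurrence.
Variables (F : numFieldType) (m s : nat) (w : F).

Local Notation E := (@exp_poly F m.+2).
Local Notation P := (seq_poly m.+2 (@seqB F)).
Local Notation g := (1 + 2%:R *: P).
Local Notation C := (inner_poly m.+2 s (@seqB F)).
Local Notation C2 := (inner_poly m.+2 s.+2 (@seqB F)).
Local Notation H := (C * E w).

Lemma inner_polyS : g * C2 = s.+1%:R *: C %[modX m.+2].
Proof.
have := eqm_comp (seq_poly_coef0 m.+2 seqB) (dfact_polyS F m.+2 s).
by rewrite comp_polyM comp_polyZ rmorphD rmorph1 /= comp_polyZ comp_polyX.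
Qed.

Lemma deriv_inner_poly : C^`() = - (C2 * P^`()) %[modX m.+1].
Proof.
rewrite /inner_poly deriv_comp -mulNr; apply: eqmMr.
by have := eqm_comp (seq_poly_coef0 m.+2 seqB) (deriv_dfact_poly F m.+1 s); rewrite rmorphN.
Qed.

Lemma exp_poly1E : E 1 = 1 + 'X + 2%:R^-1 *: ('X^2 * g) %[modX m.+2].
Proof.
have -> : E 1 = 1 + 'X + 2%:R^-1 *: (2%:R *: (E 1 - 1 - 'X)).
  by rewrite scalerA mulVf ?pnatr_eq0 // scale1r; ring.
exact/eqmD/eqmZ/eqm_sym/seqB_exp.
Qed.

Lemma mulX_deriv_seqB : 'X * P^`() = 1 + 2%:R^-1 *: ('X * g) - g %[modX m].
Proof.
apply/eqmP=> -[|[|i]] lt_im; rewrite !(coefB, coefD, coefZ, coefXM, coefC, coef_deriv) /=.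
- by rewrite seq_poly_coef0; ring.
- by rewrite seq_poly_coef0 !coef_poly /= /seqB !factS fact0; field.
- have [lt1 lt2] : (i.+1 < m.+2)%N /\ (i.+2 < m.+2)%N by lia.
  rewrite !coef_poly lt1 lt2 /= /seqB !factS !natrM -mulr_natr.
  by field; rewrite natr_fact_neq0 natr1_neq0 !natr_add_neq0.
Qed.

Lemma exp_poly_shift :
  C2 * E (w + 1) = C2 * E w + 'X * (C2 * E w) + (2%:R^-1 * s.+1%:R) *: ('X^2 * H)
  %[modX m.+2].
Proof.
apply: (eqm_trans (q := C2 * (E w * (1 + 'X + 2%:R^-1 *: ('X^2 * g))))).
  apply/eqmMl/(eqm_trans (eqm_sym (exp_polyD m.+1 w 1))).
  exact/eqmMl/exp_poly1E.
have -> : C2 * (E w * (1 + 'X + 2%:R^-1 *: ('X^2 * g))) =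
          C2 * E w + 'X * (C2 * E w) + 2%:R^-1 *: ('X^2 * (g * C2) * E w).
  by rewrite -!mul_polyC; ring.
have -> : (2%:R^-1 * s.+1%:R) *: ('X^2 * H) = 2%:R^-1 *: ('X^2 * (s.+1%:R *: C) * E w).
  by rewrite -!mul_polyC polyCM; ring.
exact/eqmD/eqmZ/eqmMr/eqmMl/inner_polyS.
Qed.

Lemma mulX_deriv_inner_exp :
  'X * H^`() =
  - (C2 * E w) - (2%:R^-1 * s.+1%:R) *: ('X * H) + s.+1%:R *: H + w *: ('X * H) %[modX m].
Proof.
apply: (eqm_trans (q := - (C2 * E w) * ('X * P^`()) + w *: ('X * H))).
  have -> : - (C2 * E w) * ('X * P^`()) + w *: ('X * H) =
            'X * (- (C2 * P^`()) * E w + C * (w *: E w)).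
    by rewrite -!mul_polyC; ring.
  apply/(eqm_leq (leqnSn m))/eqmMl; rewrite derivM.
  by apply: eqmD; [apply/eqmMr/deriv_inner_poly | apply/eqmMl/deriv_exp_poly].
apply: (eqm_trans (q := - (C2 * E w) * (1 + 2%:R^-1 *: ('X * g) - g) + w *: ('X * H))).
  exact/eqmD/eqm_refl/eqmMl/mulX_deriv_seqB.
have -> : - (C2 * E w) * (1 + 2%:R^-1 *: ('X * g) - g) + w *: ('X * H) =
          - (C2 * E w) - 2%:R^-1 *: ('X * (g * C2) * E w) + g * C2 * E w + w *: ('X * H).
  by rewrite -!mul_polyC; ring.
have -> : - (C2 * E w) - (2%:R^-1 * s.+1%:R) *: ('X * H) + s.+1%:R *: H + w *: ('X * H) =
          - (C2 * E w) - 2%:R^-1 *: ('X * (s.+1%:R *: C) * E w) + (s.+1%:R *: C) * E w +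
          w *: ('X * H).
  by rewrite -!mul_polyC polyCM; ring.
apply/(eqm_leq (leqW (leqnSn m)))/eqmD/eqm_refl.
apply: eqmD; last exact/eqmMr/inner_polyS.
by apply: eqmB => //; apply/eqmZ/eqmMr/eqmMl/inner_polyS.
Qed.

Lemma Phi_rec : (s.+1 < m)%N -> Phi m.+1 s.+2 (w + 1) = Phi m.+1 s.+2 w + w * Phi m.+1 s w.
Proof.
move=> lt_sm; rewrite /Phi (eqm_coef exp_poly_shift (_ : s.+2 < m.+2)%N); last by lia.
rewrite !coefD !coefZ coefXM coefXnM /= subn2 /=.
have := eqm_coef mulX_deriv_inner_exp lt_sm.
rewrite coefXM coef_deriv !coefD !coefN !coefZ !coefXM /=.
move: (C2 * E w)`_s.+1 H`_s H`_s.+1 => b h k eq_coef.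
have -> : b = w * h - 2%:R^-1 * s.+1%:R * h.
  by apply: (@addrI _ (k *+ s.+1)); rewrite {1}eq_coef -mulr_natr; ring.
by ring.
Qed.

End Recurrence.

Section InnerSums.
Variable F : numFieldType.

Lemma sum_binom_inner n s (v : F) : (3 * s.+1 <= n)%N ->
  \sum_(m < s.+1) (-1) ^+ m * gbinom v (s - m) * inner_sum s seqA m = Phi n s (v + 1).
Proof.
move=> le_sn; have := binom_exp_coef v le_sn.
rewrite /Phi => /(congr1 ( *%R ((-1) ^+ s))); rewrite mulrA -expr2 sqrr_sign mul1r => <-.
rewrite coefM mulr_sumr; apply: eq_bigr => -[m lt_ms] _ /=.
have [lt_mn lt_smn] : (m < n.+1)%N /\ (s - m < n.+1)%N by lia.
rewrite coef_inner_poly // coef_poly lt_smn.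
have -> : (-1) ^+ s = (-1) ^+ m * (-1) ^+ (s - m) :> F by rewrite -exprD subnKC //; lia.
set t := (-1) ^+ (s - m).
rewrite [RHS](_ : _ = (-1) ^+ m * gbinom v (s - m) * inner_sum s seqA m * (t * t)).
  by rewrite -expr2 sqrr_sign mulr1.
by ring.
Qed.

Lemma sum_exp_inner n s (w : F) : (s <= n)%N ->
  \sum_(m < s.+1) w ^+ (s - m) / ((s - m)`!)%:R * inner_sum s seqB m = Phi n s w.
Proof.
move=> le_sn; rewrite /Phi coefM; apply: eq_bigr => -[m lt_ms] _ /=.
have [lt_mn lt_smn] : (m < n.+1)%N /\ (s - m < n.+1)%N by lia.
by rewrite coef_inner_poly // coef_poly lt_smn mulrC.
Qed.

Lemma Phi0 n (w : F) : Phi n 0 w = 1.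
Proof. by rewrite /Phi coef0M inner_poly_coef0 exp_poly_coef0 mulr1. Qed.

Lemma Phi1 n (w : F) : (0 < n)%N -> Phi n 1 w = w + (inner_poly n.+1 1 seqB)`_1.
Proof.
move=> n_gt0; rewrite /Phi coefM !big_ord_recl big_ord0 addr0 /=.
rewrite inner_poly_coef0 !coef_poly /= ltnS n_gt0 expr0 expr1 divr1.
by rewrite /bump /= subnn divr1 mul1r mulr1.
Qed.

Lemma innerRhoE (a : nat -> F) r m : innerRho a r m = inner_sum (2 * r + 1) a m.
Proof.
apply: eq_bigr => k _.
by rewrite /dfact_coef (_ : 2 * r + 1 + 2 * k = (2 * r + 2 * k).+1)%N //; lia.
Qed.

Lemma rho_Phi n r (v : F) : (6 * r.+1 <= n)%N ->
  rho r v = (if r == 0%N then 1 else 0) - Phi n (2 * r + 1) (v + 1).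
Proof.
move=> le_rn; rewrite /rho; congr (_ - _).
by under eq_bigr do rewrite innerRhoE; apply: sum_binom_inner; lia.
Qed.

Lemma rhot_Phi n r (v : F) : (6 * r.+1 <= n)%N -> rhot r v = - Phi n (2 * r + 1) v.
Proof.
move=> le_rn; rewrite /rhot; under eq_bigr do rewrite innerRhoE.
by rewrite (@sum_exp_inner n) //; lia.
Qed.

Lemma gamma_Phi n r (v : F) : (6 * r.+1 <= n)%N -> gamma r v = Phi n (2 * r) (v + 1).
Proof. by move=> le_rn; apply: sum_binom_inner; lia. Qed.

Lemma gammat_Phi n r (v : F) : (6 * r.+1 <= n)%N -> gammat r v = Phi n (2 * r) v.
Proof. by move=> le_rn; apply: sum_exp_inner; lia. Qed.

End InnerSums.

Theorem proposition6p3 (R : realType) (v : R[i]) :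
  rho 0 v = rhot 0 v /\ gamma 0 v = gammat 0 v /\
  (forall r : nat, (1 <= r)%N ->
     rho r v = rhot r v + v * rhot r.-1 v /\
     gamma r v = gammat r v + v * gammat r.-1 v).
Proof.
split; first by rewrite (rho_Phi (n := 6)) // (rhot_Phi (n := 6)) // !Phi1 //; ring.
split; first by rewrite (gamma_Phi (n := 6)) // (gammat_Phi (n := 6)) // !Phi0.
case=> [|r] // _; set m := (6 * r.+2)%N.
have le_r1 : (6 * r.+2 <= m.+1)%N by apply: leqnSn.
have le_r : (6 * r.+1 <= m.+1)%N by rewrite /m; lia.
rewrite (rho_Phi _ le_r1) (rhot_Phi _ le_r1) (rhot_Phi _ le_r).
rewrite (gamma_Phi _ le_r1) (gammat_Phi _ le_r1) (gammat_Phi _ le_r).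
have lt_rho : ((2 * r + 1).+1 < m)%N by rewrite /m; lia.
have lt_gamma : ((2 * r).+1 < m)%N by rewrite /m; lia.
have -> : (2 * r.+1 + 1 = (2 * r + 1).+2)%N by lia.
have -> : (2 * r.+1 = (2 * r).+2)%N by lia.
rewrite (Phi_rec _ lt_rho) (Phi_rec _ lt_gamma) [X in X - _]/= sub0r.
by split; ring.
Qed.
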